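(* For all $n\ge1$, \[ \sum_{\sigma\in\mathcal{R}_{2n}} t^{\mathrm{drop}(\sigma)}=\sum_{j=0}^{\lfloor n/2\rfloor}\gamma_{n,j}\,t^j(1+t)^{n-2j}, \] where $\gamma_{n,j}$ is the number of primary even-odd-drop permutations in $\mathcal{R}_{2n}$ with $j$ drops.
   Context: For $\sigma\in\mathfrak{S}_m$, a drop is a pair $(i,\sigma_i)$ with $i>\sigma_i$; $i$ is the drop top and $\sigma_i$ the drop bottom; $\mathrm{drop}(\sigma)$ is the number of drops. A drop is even-odd if $i$ is even and $\sigma_i$ is odd. $\mathcal{R}_{2n}$ is the set of permutations of $[2n]$ all of whose drops are even-odd. $\sigma\in\mathcal{R}_{2n}$ with drop tops $\{t_1,\dots,t_k\}$ and drop bottoms $\{b_1,\dots,b_k\}$ is a primary even-odd-drop permutation if for all $i,j$, $t_i>b_j$ implies $t_i-b_j\ge3$. *)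

(* Permutations of [m] = {1..m} are modelled by 'S_m acting on
   'I_m = {0..m-1}; the element k : 'I_m stands for the integer k+1. *)
From HB Require Import structures.
From mathcomp Require Import all_boot all_order all_algebra all_fingroup.
Set Implicit Arguments. Unset Strict Implicit. Unset Printing Implicit Defensive.

Definition pos1 {m} (i : 'I_m) : nat := i.+1.
Definition val1 {m} (s : 'S_m) (i : 'I_m) : nat := (s i).+1.

Definition is_drop {m} (s : 'S_m) (i : 'I_m) : bool := val1 s i < pos1 i.

Definition drop_num {m} (s : 'S_m) : nat := #|[set i : 'I_m | is_drop s i]|.

Definition even_odd_drop {m} (s : 'S_m) (i : 'I_m) : bool :=
  [&& is_drop s i, ~~ odd (pos1 i) & odd (val1 s i)].

Definition in_R (n : nat) (s : 'S_(n.*2)) : bool :=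
  [forall i, is_drop s i ==> even_odd_drop s i].

Definition primary (n : nat) (s : 'S_(n.*2)) : bool :=
  in_R s &&
  [forall i, forall j, (is_drop s i && is_drop s j) ==>
     ((val1 s j < pos1 i) ==> (3 <= pos1 i - val1 s j))].

Definition gamma (n j : nat) : nat :=
  #|[set s : 'S_(n.*2) | primary s & drop_num s == j]|.

From Pilot Require Import Defs.
From HB Require Import structures.
From mathcomp Require Import all_boot all_order all_algebra all_fingroup.
From mathcomp Require Import zify.
Import GRing.Theory.
Set Implicit Arguments. Unset Strict Implicit. Unset Printing Implicit Defensive.

(* Positions and values are 0-based here, so s is in R_{2n} iff every drop
   i (s i < i) sits at an odd position and has an even value.  Group the
   positions into n blocks {2k, 2k+1}; the profile of s records, for each
   block k, whether 2k+1 is a drop top and whether 2k is a drop bottom.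
   Since a drop top is odd and a drop bottom even, the only way to violate
   primarity is a top 2k+1 above a bottom 2k, so s is primary iff no block
   of its profile is "full".

   The heart of the proof (nprof_set_full) is that filling an empty block
   does not change the number of permutations of R_{2n} with a given
   profile: the two classes are sent by one "pivot" transposition onto a
   common set, with fibres over u of sizes #{y < t <= u y} and
   #{p >= t > u p}, which agree for every permutation u (balance).  So the
   count only depends on the profile with full blocks cleared, and summing
   X^drop over all profiles above a full-free profile c0 gives
   X^(tops c0) (1 + X)^(empty blocks of c0).  For such profiles tops =
   bottoms = drops, so there are n - 2 drop empty blocks, and both sides of
   the theorem become the same sum over full-free profiles. *)

Lemma is_dropE m (s : 'S_m) i : is_drop s i = (s i < i)%N.
Proof. by rewrite /is_drop /Defs.val1 /pos1 ltnS. Qed.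

Definition drop_tops m (s : 'S_m) : {set 'I_m} := [set i | is_drop s i].
Definition drop_bots m (s : 'S_m) : {set 'I_m} := s @: drop_tops s.

Lemma in_drop_bots m (s : 'S_m) v : (v \in drop_bots s) = is_drop s ((s^-1)%g v).
Proof.
apply/imsetP/idP => [[i]|Hv]; first by rewrite inE => Hi ->; rewrite permK.
by exists ((s^-1)%g v); rewrite ?inE ?permKV.
Qed.

Lemma in_RP n (s : 'S_(n.*2)) :
  reflect (forall i, is_drop s i -> odd i /\ ~~ odd (s i)) (in_R s).
Proof.
apply: (iffP forallP) => H i; last first.
  apply/implyP => Hi; have [Hodd Hev] := H i Hi.
  by rewrite /even_odd_drop /pos1 /Defs.val1 Hi /= Hodd.
move=> Hi; have := implyP (H i) Hi; rewrite /even_odd_drop /pos1 /Defs.val1 /=.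
by rewrite negbK => /and3P [].
Qed.

Lemma in_RE n (s : 'S_(n.*2)) :
  in_R s = (drop_tops s \subset [set i : 'I__ | odd i])
        && (drop_bots s \subset [set v : 'I__ | ~~ odd v]).
Proof.
rewrite /drop_bots sub_imset_pre.
apply/in_RP/andP => [H | [/subsetP Ht /subsetP Hb] i Hi].
  split; apply/subsetP => i; rewrite !inE => /H []//.
by have := Ht i; have := Hb i; rewrite !inE Hi => /(_ isT) -> /(_ isT).
Qed.

Section Blocks.
Variable n : nat.

Lemma btop_subproof (k : 'I_n) : (k.*2.+1 < n.*2)%N.
Proof. by rewrite -doubleS leq_double. Qed.
Lemma bbot_subproof (k : 'I_n) : (k.*2 < n.*2)%N.
Proof. by rewrite ltn_double. Qed.
Lemma block_subproof (i : 'I_(n.*2)) : (i./2 < n)%N.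
Proof. by rewrite ltn_half_double. Qed.

Definition btop (k : 'I_n) : 'I_(n.*2) := Ordinal (btop_subproof k).
Definition bbot (k : 'I_n) : 'I_(n.*2) := Ordinal (bbot_subproof k).
Definition block (i : 'I_(n.*2)) : 'I_n := Ordinal (block_subproof i).

Lemma bbot_lt_btop (k : 'I_n) : (bbot k < btop k)%N.
Proof. exact: ltnSn. Qed.

Lemma btop_inj : injective btop.
Proof. by move=> a b [/double_inj/val_inj]. Qed.
Lemma bbot_inj : injective bbot.
Proof. by move=> a b [/double_inj/val_inj]. Qed.

Lemma btop_block (i : 'I_(n.*2)) : odd i -> btop (block i) = i.
Proof. by move=> Hi; apply: val_inj; rewrite /= -{2}(odd_double_half i) Hi. Qed.
Lemma bbot_block (i : 'I_(n.*2)) : ~~ odd i -> bbot (block i) = i.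
Proof. by move=> Hi; apply: val_inj; rewrite /= -{2}(odd_double_half i) (negbTE Hi). Qed.

End Blocks.

Lemma tperm_new_drop m (s : 'S_m) (y t : 'I_m) :
  (y <= s y)%N -> (s y < t)%N -> (t <= s t)%N ->
  drop_tops (tperm y t * s)%g = t |: drop_tops s /\
  drop_bots (tperm y t * s)%g = s y |: drop_bots s.
Proof.
move=> Hy Hyt Ht; set s' := (tperm y t * s)%g.
have s'E x : s' x = s (tperm y t x) by rewrite permM.
have yt : y != t by apply/eqP => E; move: Hyt Ht; rewrite E; lia.
have topsE : drop_tops s' = t |: drop_tops s.
  apply/setP => x; rewrite in_setU1 !inE !is_dropE s'E.
  case: (tpermP y t x) => [->|->|/eqP xy /eqP xt]; rewrite ?eqxx ?(negbTE xt) //.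
  by rewrite (negbTE yt); lia.
split=> //; rewrite /drop_bots topsE imsetU1 s'E tpermR; congr (_ |: _).
apply: eq_in_imset => x; rewrite inE is_dropE => Hx; rewrite s'E tpermD //.
  by apply/eqP => E; move: Hx; rewrite -E; lia.
by apply/eqP => E; move: Hx; rewrite -E; lia.
Qed.

Lemma tperm_keep_drops m (s : 'S_m) (p t : 'I_m) :
  (s t < t)%N -> (t <= p)%N -> (s p < t)%N ->
  drop_tops (tperm p t * s)%g = drop_tops s /\
  drop_bots (tperm p t * s)%g = drop_bots s.
Proof.
move=> Ht Htp Hp; set s' := (tperm p t * s)%g.
have swap_drop x : is_drop s (tperm p t x) = is_drop s x.
  by rewrite !is_dropE; case: (tpermP p t x) => [->|->|//]; lia.
have dropE x : is_drop s' x = is_drop s x.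
  by rewrite !is_dropE permM; case: (tpermP p t x) => [->|->|//]; lia.
have topsE : drop_tops s' = drop_tops s by apply/setP => x; rewrite !inE dropE.
split=> //; apply/setP => v; rewrite !in_drop_bots dropE invgM permM tpermV.
exact: swap_drop.
Qed.

Definition pivot m (b t : 'I_m) (s : 'S_m) : 'S_m := (tperm ((s^-1)%g b) t * s)%g.

Lemma pivot_fiber m (b t : 'I_m) (S : {set 'S_m}) (u : 'S_m) : u t = b ->
  #|[set s in S | pivot b t s == u]| = #|[set y | (tperm y t * u)%g \in S]|.
Proof.
move=> Hu; have tpermKg y s : (tperm y t * (tperm y t * s))%g = s.
  by rewrite mulgA tperm2 mul1g.
rewrite -(card_imset _ (f := fun y => (tperm y t * u)%g)); last first.
  move=> y1 y2 /= /(congr1 (fun s : 'S_m => s t)).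
  by rewrite !permM !tpermR => /perm_inj.
apply: eq_card => s; rewrite inE; apply/andP/imsetP => [[Hs /eqP <-]|[y]].
  by exists ((s^-1)%g b); rewrite ?inE /pivot tpermKg.
rewrite inE => Hy ->; split=> //; apply/eqP; rewrite /pivot.
have -> : ((tperm y t * u)^-1)%g b = y.
  by apply: (@perm_inj _ (tperm y t * u)%g); rewrite permKV permM tpermL.
exact: tpermKg.
Qed.

Lemma card_fiber (T U : finType) (S : {set T}) (N : {set U}) (f : T -> U) :
  {in S, forall s, f s \in N} ->
  #|S| = \sum_(u in N) #|[set s in S | f s == u]|.
Proof.
move=> H; rewrite -sum1_card (partition_big f (mem N)) //=.
by apply: eq_bigr => u _; rewrite -sum1_card; apply: eq_bigl => s; rewrite inE.
Qed.

Lemma balance m (u : 'S_m) (t : nat) :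
  #|[set y : 'I_m | (y < t)%N & (t <= u y)%N]|
  = #|[set p : 'I_m | (t <= p)%N & (u p < t)%N]|.
Proof.
set L := [set x : 'I_m | (x < t)%N]; set P := u @^-1: L.
have -> : [set y : 'I_m | (y < t)%N & (t <= u y)%N] = L :\: P.
  by apply/setP => x; rewrite !inE -leqNgt andbC.
have -> : [set p : 'I_m | (t <= p)%N & (u p < t)%N] = P :\: L.
  by apply/setP => x; rewrite !inE -leqNgt andbC.
have HPL : #|P| = #|L| by apply: card_preimset; exact: perm_inj.
by apply/eqP; rewrite -(eqn_add2l #|L :&: P|) {2}setIC cardsID cardsID HPL.
Qed.

Lemma card_preim_inj (T U : finType) (f : T -> U) (A : {set U}) :
  injective f -> {in A, forall u, exists x, u = f x} -> #|f @^-1: A| = #|A|.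
Proof.
move=> f_inj Af; rewrite -(card_imset _ f_inj); apply: eq_card => u.
apply/imsetP/idP => [[x] /[!inE] Hx ->|Hu] //.
by have [x Ex] := Af u Hu; exists x; rewrite // inE -Ex.
Qed.

(* A profile gives, for each block, (top slot is a drop top, bottom slot is
   a drop bottom). *)
Notation block_profile n := {ffun 'I_n -> bool * bool}.

Section Profiles.
Variable n : nat.
Implicit Types (s u : 'S_(n.*2)) (c : block_profile n) (k : 'I_n).

Definition profile s : block_profile n :=
  [ffun k => (btop k \in drop_tops s, bbot k \in drop_bots s)].

Lemma profileE s k :
  profile s k = (s (btop k) < btop k, bbot k < (s^-1)%g (bbot k))%N.
Proof. by rewrite ffunE inE in_drop_bots !is_dropE permKV. Qed.

Definition set_full c k : block_profile n :=
  [ffun k' => if k' == k then (true, true) else c k'].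

Lemma set_full_at c k : set_full c k k = (true, true).
Proof. by rewrite ffunE eqxx. Qed.

Lemma set_full_inj c c' k : c k = (false, false) -> c' k = (false, false) ->
  set_full c k = set_full c' k -> c = c'.
Proof.
move=> Hc Hc' /ffunP E; apply/ffunP => k'; have := E k'; rewrite !ffunE.
by case: eqP => [->|]; rewrite ?Hc ?Hc'.
Qed.

Lemma drops_determine s s' :
  drop_tops s' = drop_tops s -> drop_bots s' = drop_bots s ->
  in_R s' = in_R s /\ profile s' = profile s.
Proof. by move=> Et Eb; rewrite !in_RE /profile Et Eb. Qed.

Lemma drops_extend s s' k :
  drop_tops s' = btop k |: drop_tops s -> drop_bots s' = bbot k |: drop_bots s ->
  in_R s' = in_R s /\ profile s' = set_full (profile s) k.
Proof.
move=> Et Eb; split.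
  by rewrite !in_RE Et Eb !subUset !sub1set !inE /= odd_double.
apply/ffunP => k'; rewrite !ffunE Et Eb !in_setU1 (inj_eq (@btop_inj n)).
by rewrite (inj_eq (@bbot_inj n)); case: (k' == k).
Qed.

Definition profile_class c : {set 'S_(n.*2)} := [set s | in_R s & profile s == c].

Definition nprof c : nat := #|profile_class c|.

End Profiles.

Section FillBlock.
Variables (n : nat) (c : block_profile n) (k : 'I_n).
Hypothesis empty_k : c k = (false, false).

Let t := btop k.
Let b := bbot k.

Definition pivoted : {set 'S_(n.*2)} :=
  [set u in profile_class (set_full c k) | u t == b].

(* With block k empty, 2k+1 is not a drop and the preimage y of 2k is not a
   drop, so the pivot fills block k (tperm_new_drop). *)
Lemma pivot_empty_in s : s \in profile_class c -> pivot b t s \in pivoted.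
Proof.
rewrite inE => /andP [HR /eqP Hs]; set y := (s^-1)%g b.
have Hsy : s y = b by rewrite permKV.
have := profileE s k; rewrite Hs empty_k => -[/esym/negbT Ht /esym/negbT Hy].
have Hy' : (y <= s y)%N by rewrite Hsy leqNgt.
have Ht' : (t <= s t)%N by rewrite leqNgt.
have Hbt : (s y < t)%N by rewrite Hsy; exact: bbot_lt_btop.
have [Et Eb] := tperm_new_drop Hy' Hbt Ht'.
rewrite Hsy in Eb; have [ER EP] := drops_extend Et Eb.
by rewrite !inE ER HR EP Hs eqxx /pivot permM tpermR Hsy eqxx.
Qed.

(* With block k full, 2k+1 and the preimage of 2k are drops, so the pivot
   keeps all drops (tperm_keep_drops). *)
Lemma pivot_full_in s : s \in profile_class (set_full c k) -> pivot b t s \in pivoted.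
Proof.
rewrite inE => /andP [HR /eqP Hs]; set p := (s^-1)%g b.
have Hsp : s p = b by rewrite permKV.
have := profileE s k; rewrite Hs set_full_at -/t -/b -/p => -[/esym Ht /esym Hp].
have Hbt : (s p < t)%N by rewrite Hsp; exact: bbot_lt_btop.
have [Et Eb] := tperm_keep_drops Ht Hp Hbt.
have [ER EP] := drops_determine Et Eb.
by rewrite !inE ER HR EP Hs eqxx /pivot permM tpermR Hsp eqxx.
Qed.

Lemma empty_preimage u : u \in pivoted ->
  [set y | (tperm y t * u)%g \in profile_class c]
  = [set y : 'I_(n.*2) | (y < t)%N & (t <= u y)%N].
Proof.
rewrite !inE => /andP [/andP [HRu /eqP Hu] /eqP Hut]; apply/setP => y; rewrite !inE.
set s := (tperm y t * u)%g.
have Hsy : s y = b by rewrite permM tpermL.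
have Hst : s t = u y by rewrite permM tpermR.
have Hys : (s^-1)%g b = y by rewrite -Hsy permK.
apply/andP/andP => [[_ /eqP Hs]|[Hy Huy]].
  have := profileE s k; rewrite Hs empty_k Hst Hys => -[/esym/negbT + /esym/negbT].
  by rewrite -!leqNgt.
have Hy_s : (y <= s y)%N by rewrite Hsy.
have Hsy_t : (s y < t)%N by rewrite Hsy.
have Ht_s : (t <= s t)%N by rewrite Hst.
have [Et Eb] := tperm_new_drop Hy_s Hsy_t Ht_s.
rewrite /s mulgA tperm2 mul1g Hsy in Et Eb.
have [ER EP] := drops_extend Et Eb.
have Hsk : profile s k = (false, false).
  by rewrite profileE Hst Hys -/t -/b; congr (_, _); apply/negbTE; rewrite -leqNgt.
split; first by rewrite -ER.
by apply/eqP/(set_full_inj Hsk empty_k); rewrite -EP.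
Qed.

Lemma full_preimage u : u \in pivoted ->
  [set y | (tperm y t * u)%g \in profile_class (set_full c k)]
  = [set y : 'I_(n.*2) | (t <= y)%N & (u y < t)%N].
Proof.
rewrite !inE => /andP [/andP [HRu /eqP Hu] /eqP Hut]; apply/setP => y; rewrite !inE.
set s := (tperm y t * u)%g.
have Hsy : s y = b by rewrite permM tpermL.
have Hst : s t = u y by rewrite permM tpermR.
have Hys : (s^-1)%g b = y by rewrite -Hsy permK.
apply/andP/andP => [[_ /eqP Hs]|[Hy Huy]].
  by have := profileE s k; rewrite Hs set_full_at Hst Hys => -[<- <-].
have Hu_t : (u t < t)%N by rewrite Hut; exact: bbot_lt_btop.
have [Et Eb] := tperm_keep_drops Hu_t Hy Huy.
have [ER EP] := drops_determine Et Eb.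
by split; rewrite ?ER ?EP ?Hu.
Qed.

Lemma nprof_set_full : nprof (set_full c k) = nprof c.
Proof.
rewrite /nprof (card_fiber (f := pivot b t) pivot_empty_in).
rewrite (card_fiber (f := pivot b t) pivot_full_in); apply: eq_bigr => u Hu.
have Hut : u t = b by move: Hu; rewrite inE => /andP [_ /eqP].
by rewrite !pivot_fiber // full_preimage // empty_preimage // balance.
Qed.

End FillBlock.

Section Reduction.
Variable n : nat.
Implicit Types (c : block_profile n) (s : 'S_(n.*2)).

Definition clear_block (a : bool * bool) : bool * bool :=
  if a == (true, true) then (false, false) else a.

Definition clear_full c : block_profile n := [ffun k => clear_block (c k)].

Definition no_full c : bool := [forall k, c k != (true, true)].

Lemma nprof_clear_full c : nprof c = nprof (clear_full c).
Proof.
move Em : #|[set k | c k == (true, true)]| => m; elim: m c Em => [|m IH] c Em.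
  congr nprof; apply/ffunP => k; rewrite ffunE /clear_block; case: eqP => // Hk.
  by move/eqP: Em; rewrite cards_eq0 => /eqP/setP/(_ k); rewrite !inE Hk eqxx.
have /card_gt0P [k] : (0 < #|[set k | c k == (true, true)]|)%N by rewrite Em.
rewrite inE => /eqP Hk.
pose c1 := [ffun k' => if k' == k then (false, false) else c k'].
have c1k : c1 k = (false, false) by rewrite ffunE eqxx.
have Ec : c = set_full c1 k.
  by apply/ffunP => k'; rewrite !ffunE; case: (k' =P k) => [->|].
rewrite {1}Ec nprof_set_full // IH; last first.
  apply/eqP; rewrite -eqSS -Em (cardsD1 k [set k0 | c k0 == (true, true)]).
  rewrite inE Hk eqxx eqSS; apply/eqP/eq_card => k'; rewrite !inE ffunE.
  by case: (k' =P k) => [->|]; rewrite ?eqxx.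
by rewrite Ec; congr nprof; apply/ffunP => k'; rewrite !ffunE; case: (k' == k).
Qed.

Definition count_tops c : nat := #|[set k | (c k).1]|.
Definition count_bots c : nat := #|[set k | (c k).2]|.
Definition count_empty c : nat := #|[set k | c k == (false, false)]|.

(* Without full blocks, every block is a top, a bottom or empty. *)
Lemma count_blocks c : no_full c -> count_tops c + count_bots c + count_empty c = n.
Proof.
move=> /forallP Hc.
have cardE (P : pred 'I_n) : #|[set k | P k]| = \sum_k (P k : nat).
  rewrite -sum1_card big_mkcond; apply: eq_bigr => k _; rewrite inE.
  by case: (P k).
rewrite /count_tops /count_bots /count_empty !cardE -!big_split.
rewrite -[RHS]card_ord -sum1_card; apply: eq_bigr => k _.
by have := Hc k; case: (c k) => [[] []].
Qed.

(* In R_{2n} every drop top is a block top and every drop bottom a block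
   bottom, so drops are counted by either component of the profile. *)
Lemma drop_num_tops s : in_R s -> drop_num s = count_tops (profile s).
Proof.
move=> /in_RP HR; rewrite /count_tops.
have -> : [set k | (profile s k).1] = @btop n @^-1: drop_tops s.
  by apply/setP => k; rewrite !inE ffunE /= ?inE.
rewrite card_preim_inj //; first exact: btop_inj.
move=> i; rewrite inE => /HR [Hi _]; exists (block i); by rewrite btop_block.
Qed.

Lemma drop_num_bots s : in_R s -> drop_num s = count_bots (profile s).
Proof.
move=> /in_RP HR; rewrite /count_bots.
have -> : [set k | (profile s k).2] = @bbot n @^-1: drop_bots s.
  by apply/setP => k; rewrite !inE ffunE /= ?inE.
rewrite card_preim_inj; first by rewrite card_imset //; exact: perm_inj.
  exact: bbot_inj.
move=> v; rewrite in_drop_bots => /HR [_]; rewrite permKV => Hv.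
by exists (block v); rewrite bbot_block.
Qed.

End Reduction.

Section Primary.
Variable n : nat.
Implicit Types (s : 'S_(n.*2)).

(* A drop top i and bottom v < i of s in R_{2n} have i odd and v even, so
   i - v <= 2 forces i = v + 1, i.e. a full block. *)
Lemma primaryE s : primary s = in_R s && no_full (profile s).
Proof.
rewrite /primary; case HR: (in_R s) => //=; have /in_RP HRs := HR.
apply/forallP/forallP => [H k | H i].
  rewrite profileE; apply/eqP => -[Ht Hb].
  have /forallP/(_ ((s^-1)%g (bbot k))) := H (btop k).
  rewrite !is_dropE Ht (permKV s) Hb /pos1 /Defs.val1 (permKV s) /= ltnS subSS.
  by rewrite ltnSn subSn // subnn.
apply/forallP => j; apply/implyP => /andP [Di Dj]; apply/implyP.
rewrite /pos1 /Defs.val1 ltnS subSS => Hlt; rewrite leqNgt; apply/negP => Hclose.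
have [Hoi _] := HRs i Di; have [_ Hej] := HRs j Dj.
have Eb : bbot (block i) = s j.
  apply: val_inj => /=; move: (odd_double_half i) (odd_double_half (s j)).
  rewrite Hoi (negbTE Hej) /=; lia.
by have := H (block i); rewrite profileE btop_block // Eb permK -!is_dropE Di Dj.
Qed.

Lemma primary_count s : primary s -> count_empty (profile s) + (drop_num s).*2 = n.
Proof.
rewrite primaryE => /andP [HR Hnf]; rewrite -[RHS](count_blocks Hnf) -addnn.
by rewrite {1}(drop_num_tops HR) (drop_num_bots HR) addnC.
Qed.

End Primary.

Local Open Scope ring_scope.

Lemma prod_if (R : pzSemiRingType) (I : finType) (P : pred I) (x : R) :
  \prod_(i : I) (if P i then x else 1) = x ^+ #|[set i | P i]|.
Proof. by rewrite -big_mkcond -prodr_const; apply: eq_bigl => i; rewrite inE. Qed.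

Section GeneratingFunction.
Variable n : nat.
Implicit Types (c : block_profile n).

Definition lift_weight (a b : bool * bool) : {poly int} :=
  if clear_block b == a then (if b.1 then 'X else 1) else 0.

(* Above an empty block lie the empty and the full state: 1 + X. *)
Lemma sum_lift_weight (a : bool * bool) : a != (true, true) ->
  \sum_(b : bool * bool) lift_weight a b
  = (if a.1 then 'X else 1) * (if a == (false, false) then 1 + 'X else 1).
Proof.
rewrite (eq_bigr (fun b : bool * bool => lift_weight a (b.1, b.2))); last by case.
rewrite -(pair_bigA _ (fun b1 b2 => lift_weight a (b1, b2))) /= !big_bool /=.
rewrite /lift_weight /clear_block; case: a => [[] []] //= _;
  by rewrite ?eqxx /= ?(add0r, addr0, mulr1, mul1r) // addrC.
Qed.

(* The profiles above a full-free c0 form a product over the blocks. *)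
Lemma sum_over_lifts c0 : no_full c0 ->
  \sum_(c : block_profile n | clear_full c == c0) ('X ^+ count_tops c : {poly int})
  = 'X ^+ count_tops c0 * (1 + 'X) ^+ count_empty c0.
Proof.
move=> /forallP Hc0.
transitivity (\sum_(c : block_profile n) \prod_k lift_weight (c0 k) (c k)).
  rewrite big_mkcond; apply: eq_bigr => c _; case: eqP => [<-|Ec].
    rewrite /count_tops -prod_if; apply: eq_bigr => k _.
    by rewrite /lift_weight ffunE eqxx.
  have [k Hk] : exists k, clear_full c k != c0 k.
    apply/existsP; rewrite -negb_forall; apply/negP => /forallP H.
    by apply: Ec; apply/ffunP => k; apply/eqP.
  rewrite (bigD1 k) //= /lift_weight; move: Hk; rewrite ffunE => /negbTE ->.
  by rewrite mul0r.
rewrite -(@bigA_distr_bigA _ _ _ _ _ _ _ (fun (k : 'I_n) b => lift_weight (c0 k) b)).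
rewrite (eq_bigr _ (fun k _ => sum_lift_weight (Hc0 k))).
by rewrite big_split /= !prod_if.
Qed.

(* Left-hand side: group R_{2n} by profile, then profiles by their cleared
   form, whose count they share. *)
Lemma sum_R_by_profile :
  \sum_(s : 'S_(n.*2) | in_R s) ('X ^+ drop_num s : {poly int})
  = \sum_(c : block_profile n | no_full c)
      (nprof c)%:R * 'X ^+ count_tops c * (1 + 'X) ^+ count_empty c.
Proof.
rewrite (partition_big (@profile n) predT) //=.
transitivity (\sum_(c : block_profile n) (nprof c)%:R * ('X ^+ count_tops c : {poly int})).
  apply: eq_bigr => c _.
  transitivity (\sum_(s in profile_class c) ('X ^+ count_tops c : {poly int})).
    apply: eq_big => s; first by rewrite inE.
    by case/andP => HR /eqP <-; rewrite drop_num_tops.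
  by rewrite sumr_const mulr_natl.
rewrite (partition_big (@clear_full n) (@no_full n)) /=; last first.
  by move=> c _; apply/forallP => k; rewrite ffunE /clear_block; case: ifP => // /negbT.
apply: eq_bigr => c0 Hc0.
transitivity (\sum_(c : block_profile n | clear_full c == c0)
                (nprof c0)%:R * ('X ^+ count_tops c : {poly int})).
  by apply: eq_bigr => c /eqP <-; rewrite -nprof_clear_full.
by rewrite -mulr_sumr sum_over_lifts // mulrA.
Qed.

Lemma sum_primary_by_profile :
  \sum_(s : 'S_(n.*2) | primary s)
      ('X ^+ drop_num s * (1 + 'X) ^+ (n - (drop_num s).*2) : {poly int})
  = \sum_(c : block_profile n | no_full c)
      (nprof c)%:R * 'X ^+ count_tops c * (1 + 'X) ^+ count_empty c.
Proof.
rewrite (partition_big (@profile n) (@no_full n)) /=; last first.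
  by move=> s; rewrite primaryE => /andP [].
apply: eq_bigr => c Hc.
transitivity (\sum_(s in profile_class c)
                ('X ^+ count_tops c * (1 + 'X) ^+ count_empty c : {poly int})).
  apply: eq_big => s.
    by rewrite inE primaryE; case: (profile s =P c) => [->|]; rewrite ?Hc ?andbT ?andbF.
  case/andP => Hp /eqP <-.
  have /andP [HR _] : in_R s && no_full (profile s) by rewrite -primaryE.
  have -> : (n - (drop_num s).*2 = count_empty (profile s))%N.
    by have := primary_count Hp; lia.
  by rewrite (drop_num_tops HR).
by rewrite sumr_const -mulrA mulr_natl.
Qed.

(* Right-hand side: gamma n j counts the primary permutations with j drops,
   and primary permutations have at most n/2 drops. *)
Lemma sum_gamma_by_primary :
  \sum_(j < n./2.+1) (gamma n j)%:R * 'X ^+ j * (1 + 'X) ^+ (n - j.*2)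
  = \sum_(s : 'S_(n.*2) | primary s)
      ('X ^+ drop_num s * (1 + 'X) ^+ (n - (drop_num s).*2) : {poly int}).
Proof.
have drop_small (s : 'S_(n.*2)) : primary s -> (drop_num s < n./2.+1)%N.
  by move=> /primary_count Hn; rewrite ltnS geq_half_double; lia.
symmetry; rewrite (partition_big (fun s => inord (drop_num s) : 'I_(n./2.+1)) predT) //=.
apply: eq_bigr => j _.
transitivity (\sum_(s in [set s : 'S_(n.*2) | primary s & drop_num s == j])
                ('X ^+ j * (1 + 'X) ^+ (n - j.*2) : {poly int})).
  apply: eq_big => s; rewrite ?inE.
    by case Hp: (primary s) => //=; rewrite -val_eqE /= inordK ?drop_small.
  by case/andP => Hp /eqP <-; rewrite inordK ?drop_small.
by rewrite sumr_const -mulrA mulr_natl.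
Qed.

End GeneratingFunction.

Theorem mainTheorem6 (n : nat) (hn : (1 <= n)%N) :
  \sum_(s : 'S_(n.*2) | in_R s) ('X ^+ drop_num s : {poly int})
  = \sum_(j < n./2.+1)
      (gamma n j)%:R * 'X ^+ j * (1 + 'X) ^+ (n - j.*2)%N.
Proof.
by rewrite sum_R_by_profile sum_gamma_by_primary sum_primary_by_profile.
Qed.
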